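(* Let $G$ be a simple plane graph all of whose faces, including the outer face, are triangles, and let $\Delta(G)$ be its maximum degree. Then $\lambda(G)\ge-\Delta(G)/2$. If moreover $G$ is $k$-regular and $\chi(G)=3$, then $\lambda(G)=-k/2$.
   Context: $\lambda(G)$ is the smallest adjacency eigenvalue and $\chi(G)$ the chromatic number. *)

From HB Require Import structures.
From mathcomp Require Import all_boot all_order all_algebra all_field.
Set Implicit Arguments. Unset Strict Implicit. Unset Printing Implicit Defensive.
Import Order.TTheory GRing.Theory Num.Theory.

Section Graphs.
Variable T : finType.
Implicit Type e : rel T.

Definition deg e (v : T) : nat := #|[pred w | e v w]|.
Definition max_deg e : nat := \max_(v : T) deg e v.

(* Combinatorial embedding (rotation system): rho u is a cyclic permutation of
   the neighbourhood of u (the clockwise successor of a neighbour around u). *)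
Definition rotation e (rho : T -> T -> T) : Prop :=
  [/\ forall u v, e u v -> e u (rho u v),
      forall u v w, e u v -> e u w -> rho u v = rho u w -> v = w
    & forall u v w, e u v -> e u w -> fconnect (rho u) v w].

Definition face_map (rho : T -> T -> T) (d : T * T) : T * T := (d.2, rho d.2 d.1).

Definition darts e : {pred T * T} := [pred d : T * T | e d.1 d.2].
Definition num_edges e : nat := #|darts e| %/ 2.
Definition num_faces e (rho : T -> T -> T) : nat := fcard (face_map rho) (darts e).

(* A simple plane graph all of whose faces (including the outer one) are
   triangles: a connected simple graph with a rotation system of genus 0
   (Euler: V - E + F = 2) in which every face has boundary length 3. *)
Definition plane_triangulation e : Prop :=
  [/\ symmetric e, irreflexive e, (forall x y, connect e x y) &
   exists rho, [/\ rotation e rho,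
                   #|T| + num_faces e rho = num_edges e + 2
                 & forall d, d \in darts e -> iter 3 (face_map rho) d = d]].

Definition adjmx e : 'M[algC]_#|T| :=
  \matrix_(i, j) ((e (enum_val i) (enum_val j))%:R)%R.

Definition is_min_eigenvalue n (A : 'M[algC]_n) (l : algC) : Prop :=
  eigenvalue A l /\ forall m, eigenvalue A m -> (l <= m)%R.

Definition colorable e (k : nat) : bool :=
  [exists c : {ffun T -> 'I_k}, [forall x, forall y, e x y ==> (c x != c y)]].

Definition chromatic_number e (k : nat) : Prop :=
  colorable e k /\ forall j, colorable e j -> k <= j.

End Graphs.

From HB Require Import structures.
From mathcomp Require Import all_boot all_order all_algebra all_field.
From mathcomp Require Import ring.
Import Order.TTheory GRing.Theory Num.Theory.
Local Open Scope ring_scope.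
Set Implicit Arguments. Unset Strict Implicit.

(* Let f be the face-tracing permutation of the darts.  All faces being
   triangles, f^3 = 1, and the face of the dart (u, v) is {u, v, w} with
   w = (f (u, v)).2.  Summing |x u + x v + x w|^2 over all darts, and using
   that f permutes the darts, gives 3 (sum_v deg v |x v|^2 + 2 x^* A x) >= 0;
   for an eigenvector x of A with eigenvalue a this reads
   0 <= (Delta + 2 a) |x|^2.
   For the equality case, rho s exchanges the neighbours of s of the two
   colours other than that of s, so a proper 3-colouring splits every
   neighbourhood evenly; the vector equal to 2 on one colour class and -1
   elsewhere is then an eigenvector for -k/2. *)

Lemma real_seq_min (R : numDomainType) (r : seq R) :
  r != [::] -> {in r, forall z, z \is Num.real} ->
  exists2 m, m \in r & {in r, forall z, m <= z}.
Proof.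
elim: r => // a r IH _ r_real.
have a_real : a \is Num.real by apply: r_real; rewrite mem_head.
have [-> | /IH [|m m_r m_min]] := eqVneq r [::].
- by exists a; rewrite ?mem_head // => z; rewrite inE => /eqP ->.
- by move=> z z_r; apply: r_real; rewrite inE z_r orbT.
have m_real : m \is Num.real by apply: r_real; rewrite inE m_r orbT.
have [am | ma] := real_leP a_real m_real.
- exists a; first exact: mem_head.
  by move=> z; rewrite inE => /predU1P [-> // | /m_min]; apply: le_trans.
- exists m; first by rewrite inE m_r orbT.
  by move=> z; rewrite inE => /predU1P [-> | /m_min //]; apply: ltW.
Qed.

Lemma min_eigenvalue_exists n (A : 'M[algC]_n) :
  (0 < n)%N -> (forall a, eigenvalue A a -> a \is Num.real) ->
  exists l, is_min_eigenvalue A l.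
Proof.
move=> n_gt0 eig_real.
have [r char_r] := closed_field_poly_normal (char_poly A).
rewrite (monicP (char_poly_monic A)) scale1r in char_r.
have eigE a : eigenvalue A a = (a \in r).
  by rewrite eigenvalue_root_char char_r root_prod_XsubC.
have r_nil : r != [::].
  apply: contraTneq n_gt0 => r0; have := size_char_poly A.
  by rewrite char_r r0 big_nil size_poly1 => -[<-].
have [|l l_r l_min] := real_seq_min r_nil.
  by move=> a; rewrite -eigE; apply: eig_real.
by exists l; split=> [|m]; rewrite eigE // => /l_min.
Qed.

Lemma ord3_third : forall a b c d : 'I_3,
  a != b -> b != c -> a != c -> d != a -> d != b -> d == c.
Proof.
by move=> [[|[|[|//]]] ?] [[|[|[|//]]] ?] [[|[|[|//]]] ?] [[|[|[|//]]] ?].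
Qed.

Lemma leq_card_in_inj (T : finType) (f : T -> T) (A B : {pred T}) :
  {in A &, injective f} -> {in A, forall x, f x \in B} -> (#|A| <= #|B|)%N.
Proof.
move=> f_inj fAB; rewrite -(card_in_imset f_inj); apply: subset_leq_card.
by apply/subsetP => _ /imsetP [x xA ->]; apply: fAB.
Qed.

Lemma sum_natr_pred (R : pzSemiRingType) (T : finType) (P : pred T) :
  \sum_t (P t)%:R = #|P|%:R :> R.
Proof.
rewrite -sumr_const [RHS]big_mkcond.
by apply: eq_bigr => t _; rewrite unfold_in; case: (P t).
Qed.

Lemma sum_sqr_gt0 (T : finType) (x : T -> algC) t0 :
  x t0 != 0 -> 0 < \sum_t x t * (x t)^*.
Proof.
move=> xt0; rewrite (bigD1 t0) //= ltr_wpDr ?mul_conjC_gt0 //.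
by apply: sumr_ge0 => t _; apply: mul_conjC_ge0.
Qed.

Section Adjacency.
Variables (T : finType) (e : rel T).

Lemma sum_enum_val (G : T -> algC) :
  \sum_(i < #|T|) G (enum_val i) = \sum_t G t.
Proof.
rewrite (reindex enum_rank) /=; last exact/onW_bij/enum_rank_bij.
by apply: eq_bigr => t _; rewrite enum_rankK.
Qed.

Lemma eigenvalue_adjmxP a :
  eigenvalue (adjmx e) a <->
  exists2 x : T -> algC, (forall s, \sum_t x t * (e t s)%:R = a * x s)
                       & exists t, x t != 0.
Proof.
split=> [/eigenvalueP [v v_eig v_nz] | [x x_eig [t0 xt0]]].
  exists (fun t => v 0 (enum_rank t)).
    move=> s; have /rowP /(_ (enum_rank s)) := v_eig; rewrite !mxE => <-.
    rewrite -sum_enum_val; apply: eq_bigr => i _.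
    by rewrite enum_valK mxE enum_rankK.
  apply/existsP; rewrite -negb_forall; apply: contra v_nz => /forallP v0.
  by apply/eqP/rowP => j; rewrite !mxE -(enum_valK j); apply/eqP/v0.
apply/eigenvalueP; exists (\row_i x (enum_val i)).
  apply/rowP => j; rewrite !mxE -x_eig -sum_enum_val.
  by apply: eq_bigr => i _; rewrite !mxE.
apply: contra xt0 => /eqP /rowP /(_ (enum_rank t0)).
by rewrite !mxE enum_rankK => ->.
Qed.

Lemma sum_darts (F : T -> T -> algC) :
  \sum_(d in darts e) F d.1 d.2 = \sum_t \sum_s (e t s)%:R * F t s.
Proof.
rewrite pair_big /= big_mkcond; apply: eq_bigr => -[t s] _ /=.
by rewrite inE; case: (e t s); rewrite ?mul1r ?mul0r.
Qed.

Lemma max_deg_regular k :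
  (0 < #|T|)%N -> (forall v, deg e v = k) -> max_deg e = k.
Proof.
case/card_gt0P => t0 _ e_reg; apply/eqP; rewrite eqn_leq.
rewrite -{2}(e_reg t0) leq_bigmax andbT.
by apply/bigmax_leqP => v _; rewrite e_reg.
Qed.

Hypothesis e_sym : symmetric e.

Lemma sum_darts_swap (g : T * T -> algC) :
  \sum_(d in darts e) g (d.2, d.1) = \sum_(d in darts e) g d.
Proof.
rewrite [RHS](reindex_inj (h := fun d : T * T => (d.2, d.1))) /=.
  by apply: eq_bigl => -[u v]; rewrite !inE /= e_sym.
by move=> [u v] [u' v'] [-> ->].
Qed.

Lemma sum_adj_deg s : \sum_t (e t s)%:R = (deg e s)%:R :> algC.
Proof. by under eq_bigr do rewrite e_sym; apply: sum_natr_pred. Qed.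

Section Eigenvector.
Variables (a : algC) (x : T -> algC).
Hypothesis x_eig : forall s, \sum_t x t * (e t s)%:R = a * x s.

Lemma sum_darts_eigen :
  \sum_(d in darts e) x d.1 * (x d.2)^* = a * \sum_t x t * (x t)^*.
Proof.
rewrite (sum_darts (fun t s => x t * (x s)^*)) exchange_big mulr_sumr.
apply: eq_bigr => s _; rewrite mulrA -x_eig mulr_suml.
by apply: eq_bigr => t _; rewrite mulrCA mulrA mulrC.
Qed.

Lemma sum_darts_eigen_swap :
  \sum_(d in darts e) x d.2 * (x d.1)^* = a * \sum_t x t * (x t)^*.
Proof.
by rewrite (sum_darts_swap (fun d => x d.1 * (x d.2)^*)) sum_darts_eigen.
Qed.

End Eigenvector.

Lemma adjmx_eigenvalue_real a : eigenvalue (adjmx e) a -> a \is Num.real.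
Proof.
case/eigenvalue_adjmxP => x x_eig [t0 xt0].
set N := \sum_t x t * (x t)^*.
have N_gt0 : 0 < N := sum_sqr_gt0 xt0.
have aN_conj : (a * N)^* = a * N.
  rewrite -{1}(sum_darts_eigen x_eig) -(sum_darts_eigen_swap x_eig) rmorph_sum.
  by apply: eq_bigr => d _; rewrite rmorphM /= conjCK mulrC.
apply/CrealP; apply: (mulIf (lt0r_neq0 N_gt0)).
by rewrite -{1}(conj_Creal (gtr0_real N_gt0)) -rmorphM.
Qed.

End Adjacency.

Section Triangulation.
Variables (T : finType) (e : rel T) (rho : T -> T -> T).
Hypotheses (e_sym : symmetric e) (rho_rot : rotation e rho).
Hypothesis faces3 : forall d, d \in darts e -> iter 3 (face_map rho) d = d.
Local Notation f := (face_map rho).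

Lemma face_map_dart d : d \in darts e -> f d \in darts e.
Proof.
by case: rho_rot => rho_nbr _ _; rewrite !inE /= => d_e; rewrite rho_nbr // e_sym.
Qed.

Lemma sum_darts_face_map (g : T * T -> algC) :
  \sum_(d in darts e) g (f d) = \sum_(d in darts e) g d.
Proof.
have f_inj : {in darts e &, injective f}.
  by move=> d d' dD d'D fdd'; rewrite -[d](faces3 dD) -[d'](faces3 d'D) /= fdd'.
rewrite -(big_imset _ f_inj); apply: eq_bigl => d; apply/imsetP/idP.
  by case=> d' d'D ->; apply: face_map_dart.
by move=> dD; exists (f (f d)); [do 2 apply: face_map_dart | exact/esym/faces3].
Qed.

Lemma triangle_form_ge0 (x : T -> algC) :
  0 <= \sum_(d in darts e)
         (x d.2 * (x d.2)^* + (x d.1 * (x d.2)^* + x d.2 * (x d.1)^*)).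
Proof.
set R := fun d : T * T => x d.2 * (x d.2)^*.
set P := fun d : T * T => x d.1 * (x d.2)^* + x d.2 * (x d.1)^*.
have face_norm d : d \in darts e ->
    (x d.1 + x d.2 + x (f d).2) * (x d.1 + x d.2 + x (f d).2)^* =
    R d + R (f d) + R (f (f d)) + (P d + P (f d) + P (f (f d))).
  move=> dD; have d1E : d.1 = (f (f d)).2 by rewrite -{1}(faces3 dD).
  by rewrite /R /P d1E /= !rmorphD; ring.
rewrite -(pmulrn_lge0 _ (ltn0Sn 2)).
have -> : (\sum_(d in darts e) (R d + P d)) *+ 3 =
    \sum_(d in darts e)
      (x d.1 + x d.2 + x (f d).2) * (x d.1 + x d.2 + x (f d).2)^*.
  rewrite (eq_bigr _ face_norm); clearbody R P; rewrite !big_split /=.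
  rewrite (sum_darts_face_map (fun d => R (f d))).
  rewrite (sum_darts_face_map (fun d => P (f d))).
  by rewrite !sum_darts_face_map !mulrS mulr0n; ring.
by apply: sumr_ge0 => d _; apply: mul_conjC_ge0.
Qed.

Lemma adjmx_eigenvalue_ge a :
  eigenvalue (adjmx e) a -> - ((max_deg e)%:R / 2) <= a.
Proof.
case/eigenvalue_adjmxP => x x_eig [t0 xt0].
set N := \sum_t x t * (x t)^*.
have N_gt0 : 0 < N := sum_sqr_gt0 xt0.
have deg_bound : \sum_(d in darts e) x d.2 * (x d.2)^* <= (max_deg e)%:R * N.
  rewrite (sum_darts e (fun _ s => x s * (x s)^*)) exchange_big /N mulr_sumr.
  apply: ler_sum => s _; rewrite -mulr_suml sum_adj_deg //.
  by rewrite ler_wpM2r ?mul_conjC_ge0 // ler_nat leq_bigmax.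
have : 0 <= ((max_deg e)%:R + (a + a)) * N.
  apply: le_trans (triangle_form_ge0 x) _; rewrite !big_split /=.
  rewrite (sum_darts_eigen x_eig) (sum_darts_eigen_swap e_sym x_eig).
  by rewrite !mulrDl lerD2r.
rewrite pmulr_lge0 // => ge0.
rewrite -subr_ge0 opprK -(pmulr_lge0 _ (ltr0n _ 2)) mulrDl divfK ?pnatr_eq0 //.
by rewrite addrC mulr_natr mulr2n.
Qed.

Lemma rotation_adjacent s t : e s t -> e t (rho s t).
Proof.
move=> st; have ts : (t, s) \in darts e by rewrite inE /= e_sym.
(* f (f (t, s)) = (rho s t, t), since f^3 fixes (t, s). *)
have /face_map_dart := face_map_dart ts; rewrite inE /=.
by rewrite -[X in e _ X]/((iter 3 f (t, s)).1) faces3 // e_sym.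
Qed.

Variables (c : T -> 'I_3) (p : 'I_3).
Hypothesis c_proper : forall u v, e u v -> c u != c v.

Lemma card_nbr_colour s :
  c s != p -> (#|[pred t | e s t && (c t == p)]|.*2 = deg e s)%N.
Proof.
move=> csp; case: rho_rot => rho_nbr rho_inj _.
set A := [pred t | e s t && (c t == p)].
set B := [pred t | e s t && (c t != p)].
have rho_s_inj (C : {pred T}) : {subset C <= [pred t | e s t]} ->
    {in C &, injective (rho s)}.
  by move=> CN u v /CN uN /CN vN; apply: rho_inj.
have rhoAB : {in A, forall t, rho s t \in B}.
  move=> t /andP [st /eqP ctp]; rewrite inE rho_nbr //= -ctp eq_sym.
  exact/c_proper/rotation_adjacent.
have rhoBA : {in B, forall t, rho s t \in A}.
  move=> t /andP [st ctp]; rewrite inE rho_nbr //=.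
  have stt := rho_nbr _ _ st; have ttt := rotation_adjacent st.
  by apply: (ord3_third (c_proper st)); rewrite // eq_sym ?c_proper // eq_sym.
have leAB : (#|A| <= #|B|)%N.
  by apply: leq_card_in_inj rhoAB; apply: rho_s_inj => t /andP [].
have leBA : (#|B| <= #|A|)%N.
  by apply: leq_card_in_inj rhoBA; apply: rho_s_inj => t /andP [].
have AB : (#|A| + #|B| = deg e s)%N.
  rewrite /deg -(cardID [pred t | c t == p] [pred t | e s t]).
  by congr (_ + _)%N; apply: eq_card => t; rewrite !inE // andbC.
have eqAB : #|A| = #|B| by apply/anti_leq; rewrite leAB leBA.
by rewrite -AB -eqAB addnn.
Qed.

Lemma colour_eigenvector k : (forall v, deg e v = k) ->
  forall s, \sum_t (if c t == p then 2 else -1) * (e t s)%:R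
            = - (k%:R / 2) * (if c s == p then 2 else -1) :> algC.
Proof.
move=> e_reg s; set Np := [pred t | e s t && (c t == p)].
have sum_Np : \sum_t (if c t == p then 2 else -1) * (e t s)%:R
              = 3 * #|Np|%:R - k%:R :> algC.
  rewrite -(e_reg s) -sum_adj_deg // -sum_natr_pred mulr_sumr -sumrB.
  apply: eq_bigr => t _; rewrite /Np /= e_sym.
  by case: (e s t); case: (c t == p) => /=; ring.
rewrite sum_Np; case: eqP => [csp | /eqP csp].
  suff -> : #|Np| = 0%N by rewrite mulr0 sub0r mulNr divfK ?pnatr_eq0.
  apply: eq_card0 => t; rewrite !inE; apply/andP => -[st /eqP ctp].
  by have := c_proper st; rewrite ctp csp eqxx.
rewrite -(e_reg s) -(card_nbr_colour csp) -mul2n natrM.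
by rewrite /Np; field.
Qed.

End Triangulation.

Lemma euler_card_gt0 (T : finType) (e : rel T) (rho : T -> T -> T) :
  (#|T| + num_faces e rho = num_edges e + 2)%N -> (0 < #|T|)%N.
Proof.
case: (posnP #|T|) => // T0.
have darts0 (A : {pred T * T}) : #|A| = 0%N.
  by apply: eq_card0 => d; have := card0_eq T0 d.1.
by rewrite /num_faces /n_comp_mem /num_edges !darts0 T0.
Qed.

Theorem mainTheorem16 (T : finType) (e : rel T) :
  plane_triangulation e ->
  (exists l : algC, is_min_eigenvalue (adjmx e) l /\ - ((max_deg e)%:R / 2) <= l) /\
  (forall k : nat, (forall v, deg e v = k) -> chromatic_number e 3 ->
     is_min_eigenvalue (adjmx e) (- (k%:R / 2))).
Proof.
move=> [e_sym _ _ [rho [rho_rot euler faces3]]].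
have T_gt0 := euler_card_gt0 euler.
have eig_ge := adjmx_eigenvalue_ge e_sym rho_rot faces3.
split.
  have [|l l_min] := @min_eigenvalue_exists _ (adjmx e) T_gt0.
    exact: adjmx_eigenvalue_real.
  by exists l; split; last exact: eig_ge l_min.1.
move=> k e_reg [/existsP [c /forallP c_proper] _].
have {}c_proper u v : e u v -> c u != c v.
  by move=> uv; have /forallP /(_ v) := c_proper u; rewrite uv.
have [t0 _] := card_gt0P T_gt0.
split=> [|m]; last by rewrite -(max_deg_regular T_gt0 e_reg); apply: eig_ge.
apply/eigenvalue_adjmxP; exists (fun t => if c t == c t0 then 2 else -1).
  exact: (colour_eigenvector e_sym rho_rot faces3 (c t0) c_proper e_reg).
by exists t0; rewrite eqxx pnatr_eq0.
Qed.
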